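(* Let $p$ be a prime, $C\subseteq\mathbb{F}_p^{2n}$ a symplectic self-orthogonal code with stabilizer code $Q(C)\subseteq\mathbb{C}^{p^n}$, and let $\emptyset\neq I\subsetneq J\subsetneq\{1,\dots,n\}$. If \[\sigma_I\left[\pi_J\left(C^{\perp_s}\right)\right]=\sigma_I(C),\] then $Q(C)$ is $(I,J)$-locally recoverable.
   Context: Vectors of $\mathbb{F}_p^{2n}$ are written $(\mathbf a|\mathbf b)$, $\mathbf a,\mathbf b\in\mathbb F_p^n$, coordinate pair $(a_j,b_j)$ indexed by $j\in\{1,\dots,n\}$. Symplectic form: $(\mathbf a|\mathbf b)\cdot_s(\mathbf c|\mathbf d)=\mathbf a\cdot\mathbf d-\mathbf b\cdot\mathbf c$; $C^{\perp_s}$ is the dual; $C$ is symplectic self-orthogonal if $C\subseteq C^{\perp_s}$. For $R\subseteq\{1,\dots,n\}$: $\pi_R(\mathbf a|\mathbf b)=(a_j|b_j)_{j\in R}$, puncturing $\pi_R(D)=\{\pi_R(\mathbf y):\mathbf y\in D\}$, shortening $\sigma_R(D)=\{\pi_R(\mathbf y):\mathbf y=(\mathbf a|\mathbf b)\in D,\ \mathrm{supp}(\mathbf a)\cup\mathrm{supp}(\mathbf b)\subseteq R\}$; for $I\subseteq J$ the shortening at $I$ of a code in $\mathbb F_p^{2|J|}$ (pairs indexed by $J$) is defined the same way. Quantum setting: $\xi=e^{2\pi\iota/p}$, $X(a)|x\rangle=|x+a\rangle$, $Z(b)|x\rangle=\xi^{bx}|x\rangle$ on $\mathbb C^p$, $E_{(\mathbf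 a,\mathbf b)}=\bigotimes_jX(a_j)Z(b_j)$. $Q(C)$ is the common eigenspace $\{v:Ev=\lambda(E)v\ \forall E\in S\}$, $S$ the commutative group generated by scalars $\xi^\ell\mathcal I$ and $E_{\mathbf y}$, $\mathbf y\in C$, $\lambda$ a character of $S$ with $\lambda(\xi\mathcal I)=\xi$. Let $\Gamma(\rho)=p^{-2}\sum_{a,b}X(a)Z(b)\rho (X(a)Z(b))^\dagger$, and $\Gamma^I$ apply $\Gamma$ to the qudits indexed by $I$ and the identity elsewhere. For $\emptyset\ne I\subsetneq J$, a code $Q$ is $(I,J)$-locally recoverable if there is a trace-preserving quantum operation $\mathcal R$ acting only on the qudits indexed by $J$ (identity on the others) with $\mathcal R\circ\Gamma^I(|\varphi\rangle\langle\varphi|)=|\varphi\rangle\langle\varphi|$ for all $|\varphi\rangle\in Q$. *)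

From mathcomp Require Import all_boot all_order all_algebra all_field.
Set Implicit Arguments. Unset Strict Implicit. Unset Printing Implicit Defensive.
Import Order.TTheory GRing.Theory Num.Theory.
Local Open Scope ring_scope.

Section Defs.
Variables (p n : nat).

(** Vectors (a|b) of F_p^{2n}: pairs of row vectors; coordinate j : 'I_n
    (0-based indexing of {1,...,n}). *)
Definition vec := ('rV['F_p]_n * 'rV['F_p]_n)%type.

Definition code_subspace (C : {set vec}) : Prop :=
  ((0 : 'rV['F_p]_n), (0 : 'rV['F_p]_n)) \in C /\
  forall (c : 'F_p) (u v : vec), u \in C -> v \in C ->
    (c *: u.1 + v.1, c *: u.2 + v.2) \in C.

Definition sform (x y : vec) : 'F_p :=
  \sum_(j < n) x.1 0 j * y.2 0 j - \sum_(j < n) x.2 0 j * y.1 0 j.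

Definition sdual (C : {set vec}) : {set vec} :=
  [set y | [forall x in C, sform x y == 0]].

Definition supp (y : vec) : {set 'I_n} :=
  [set j | (y.1 0 j != 0) || (y.2 0 j != 0)].

(** pi_R(y): restriction to the coordinate pairs in R.  A vector of
    F_p^{2|R|} (pairs indexed by R) is encoded by its extension by zero
    outside R; this encoding is injective for fixed R. *)
Definition proj (R : {set 'I_n}) (y : vec) : vec :=
  (\row_j (if j \in R then y.1 0 j else 0), \row_j (if j \in R then y.2 0 j else 0)).

Definition puncturing (R : {set 'I_n}) (D : {set vec}) : {set vec} :=
  [set proj R y | y in D].

Definition shortening (R : {set 'I_n}) (D : {set vec}) : {set vec} :=
  [set proj R y | y in [set y in D | supp y \subset R]].

(** Quantum setting.  Basis states |x>, x : 'I_n -> F_p, of C^{p^n};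
    operators are functions (row index) -> (column index) -> algC. *)
Definition cfg := {ffun 'I_n -> 'F_p}.
Definition ket := cfg -> algC.
Definition op := cfg -> cfg -> algC.

(** xi = e^{2 pi i / p}: p.-root (-1) = e^{i pi / p} (root of minimal argument) *)
Definition xi : algC := (p.-root (-1)) ^+ 2.

Definition idop : op := fun y x => (y == x)%:R.
Definition scaleop (c : algC) (A : op) : op := fun y x => c * A y x.
Definition mulop (A B : op) : op := fun y x => \sum_(z : cfg) A y z * B z x.
Definition addop (A B : op) : op := fun y x => A y x + B y x.
Definition adjop (A : op) : op := fun y x => (A x y)^*.
Definition trace (A : op) : algC := \sum_(x : cfg) A x x.
Definition applyop (A : op) (v : ket) : ket := fun y => \sum_(x : cfg) A y x * v x.
Definition outer (v : ket) : op := fun y x => v y * (v x)^*.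
Definition op_eq (A B : op) : Prop := forall y x, A y x = B y x.

(** E_(a,b) = (X)(a_j) Z(b_j) tensor product:
    E |x> = xi^(sum_j b_j x_j) |x + a>, written factor by factor. *)
Definition Eop (y : vec) : op := fun u x =>
  (u == [ffun j => x j + y.1 0 j])%:R *
  \prod_(j < n) xi ^+ (nat_of_ord (y.2 0 j * x j)).

(** The stabilizer group S: generated by the scalars xi^l I and the E_y,
    y in C (a finite group, so the generated monoid is the generated group). *)
Inductive inS (C : {set vec}) : op -> Prop :=
  | inS_scal (l : nat) : inS C (scaleop (xi ^+ l) idop)
  | inS_E (y : vec) : y \in C -> inS C (Eop y)
  | inS_mul (A B : op) : inS C A -> inS C B -> inS C (mulop A B).

Definition is_character (C : {set vec}) (lam : op -> algC) : Prop :=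
  (forall A B, inS C A -> inS C B -> lam (mulop A B) = lam A * lam B) /\
  lam (scaleop xi idop) = xi.

Definition Qcode (C : {set vec}) (lam : op -> algC) (v : ket) : Prop :=
  forall A, inS C A -> forall u, applyop A v u = lam A * v u.

Definition unitvec (i : 'I_n) (c : 'F_p) : 'rV['F_p]_n :=
  \row_j (if j == i then c else 0).
Definition XZat (i : 'I_n) (a b : 'F_p) : op := Eop (unitvec i a, unitvec i b).

Definition gamma_at (i : 'I_n) (rho : op) : op :=
  scaleop ((p ^ 2)%:R^-1)
    (fun u x => \sum_(a : 'F_p) \sum_(b : 'F_p)
        mulop (mulop (XZat i a b) rho) (adjop (XZat i a b)) u x).

(** Gamma^I: Gamma on each qudit of I (these commute) *)
Definition GammaI (I : {set 'I_n}) (rho : op) : op :=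
  foldr gamma_at rho (enum I).

(** Operators acting only on qudits in J: B_J (x) identity on the others. *)
Definition restr (J : {set 'I_n}) (x : cfg) : cfg :=
  [ffun j => if j \in J then x j else 0].
Definition agree_off (J : {set 'I_n}) (u x : cfg) : bool :=
  [forall j, (j \notin J) ==> (u j == x j)].
Definition liftJ (J : {set 'I_n}) (B : op) : op := fun u x =>
  (agree_off J u x)%:R * B (restr J u) (restr J x).

Definition kraus_map (m : nat) (K : 'I_m -> op) (rho : op) : op :=
  fun u x => \sum_(k < m) mulop (mulop (K k) rho) (adjop (K k)) u x.

Definition locally_recoverable (I J : {set 'I_n}) (Q : ket -> Prop) : Prop :=
  exists (m : nat) (B : 'I_m -> op),
    let R := kraus_map (fun k => liftJ J (B k)) in
    (forall rho : op, trace (R rho) = trace rho) /\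
    (forall phi : ket, Q phi -> op_eq (R (GammaI I (outer phi))) (outer phi)).

End Defs.

(* The recovery map measures the syndrome with respect to C_J, the codewords supported
   in J, and undoes it.  Its Kraus operators are K_w = alpha P (E_(t w))^dagger, one for
   each w in F_p^2n: P = |C_J|^-1 sum_(c in C_J) lambda(E_c)^-1 E_c projects onto the joint
   eigenspace of the E_c, and t w, supported in J (in I whenever possible), has the same
   C_J-syndrome as w.  These operators act on J only, and completeness follows from the
   orthogonality of the characters x |-> xi^<c, x>.
   Gamma^I turns |phi><phi| into a convex combination of the E_e |phi><phi| E_e^dagger
   with e supported in I.  K_w E_e phi vanishes unless e - t w has zero C_J-syndrome; then
   e - t w is supported in I and orthogonal to C_J, hence it is the restriction of an
   element of the dual, i.e. lies in sigma_I(pi_J(C^perp)) = sigma_I(C), and E_(e - t w)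
   acts on phi as a scalar.  Trace preservation then forces the recovered state to be
   |phi><phi|. *)

From mathcomp Require Import all_boot all_order all_algebra all_field.
From mathcomp Require Import ring.
From Stdlib Require Import FunctionalExtensionality.
Set Implicit Arguments. Unset Strict Implicit. Unset Printing Implicit Defensive.
Import Order.TTheory GRing.Theory Num.Theory.
Local Open Scope ring_scope.

Section AdditiveCharacter.
Variable p : nat.
Hypothesis Hp : prime p.

Lemma xi_expp : xi p ^+ p = 1.
Proof.
rewrite /xi -exprM mulnC exprM rootCK ?prime_gt0 //.
by rewrite expr2 mulrNN mulr1.
Qed.

Lemma xi_neq1 : xi p != 1.
Proof.
apply/eqP => /eqP; rewrite sqrf_eq1 => /orP[] /eqP xi1.
- have := rootCK (prime_gt0 Hp) (-1 : algC); rewrite xi1 expr1n => /eqP.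
  by rewrite eq_sym (lt_eqF (lt_trans (ltrN10 _) ltr01)).
- by have := rootC_lt0 (-1 : algC) (prime_gt1 Hp); rewrite xi1 ltrN10.
Qed.

Lemma xi_primitive : p.-primitive_root (xi p).
Proof.
have [m xi_m m_p] := prim_order_exists (prime_gt0 Hp) xi_expp.
case/primeP: Hp => _ /(_ m m_p) /orP[] /eqP m_eq; subst m => //.
by have := prim_expr_order xi_m; rewrite expr1 => xi1; case/eqP: xi_neq1.
Qed.

Definition chi (a : 'F_p) : algC := xi p ^+ (nat_of_ord a).

Lemma chiD a b : chi (a + b) = chi a * chi b.
Proof.
have valD : nat_of_ord (a + b) = ((nat_of_ord a + nat_of_ord b) %% p)%N.
  by rewrite /=; congr (_ %% _)%N; exact: Fp_cast.
by rewrite /chi valD expr_mod ?xi_expp // exprD.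
Qed.

Lemma chi0 : chi 0 = 1.
Proof. by rewrite /chi expr0. Qed.

Lemma chi_neq0 a : chi a != 0.
Proof.
by apply/eqP => chi_a0; have /eqP := chiD a (- a); rewrite subrr chi0 chi_a0 mul0r oner_eq0.
Qed.

Lemma chiN a : chi (- a) = (chi a)^-1.
Proof. by apply: (mulfI (chi_neq0 a)); rewrite -chiD subrr chi0 divff ?chi_neq0. Qed.

Lemma chi_eq1 a : chi a = 1 -> a = 0.
Proof.
move=> chi_a1; have p_dvd_a : (p %| nat_of_ord a)%N.
  by rewrite (prim_order_dvd xi_primitive) -/(chi a) chi_a1.
have a_lt_p : (nat_of_ord a < p)%N by have := ltn_ord a; rewrite [X in (_ < X)%N -> _]Fp_cast.
case: (posnP (nat_of_ord a)) => [a0 | a_gt0]; first exact: val_inj.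
by have := dvdn_leq a_gt0 p_dvd_a; rewrite leqNgt a_lt_p.
Qed.

Lemma norm_chi a : `|chi a| = 1.
Proof.
have norm_xi : `|xi p| = 1.
  by apply/eqP; rewrite -(pexpr_eq1 (prime_gt0 Hp)) // -normrX xi_expp normr1.
by rewrite /chi normrX norm_xi expr1n.
Qed.

Lemma chi_mulconj a : chi a * (chi a)^* = 1.
Proof. by rewrite -normCK norm_chi expr1n. Qed.

Lemma conj_chi a : (chi a)^* = chi (- a).
Proof. by rewrite chiN; apply: (mulfI (chi_neq0 a)); rewrite chi_mulconj divff ?chi_neq0. Qed.

Lemma chi_sum (I : Type) (r : seq I) (P : pred I) (F : I -> 'F_p) :
  chi (\sum_(i <- r | P i) F i) = \prod_(i <- r | P i) chi (F i).
Proof. exact: (big_morph chi chiD chi0). Qed.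

End AdditiveCharacter.

Ltac opext := let y := fresh "y" in let x := fresh "x" in
  apply: functional_extensionality => y; apply: functional_extensionality => x.

Section OperatorAlgebra.
Variables p n : nat.
Local Notation op := (op p n).
Local Notation ket := (ket p n).

Lemma mulopA (A B D : op) : mulop (mulop A B) D = mulop A (mulop B D).
Proof.
opext; rewrite /mulop.
under eq_bigr => z _ do rewrite big_distrl /=.
rewrite exchange_big; apply: eq_bigr => w _.
by rewrite big_distrr /=; apply: eq_bigr => z _; rewrite -mulrA.
Qed.

Lemma mul1op (A : op) : mulop (@idop p n) A = A.
Proof.
opext; rewrite /mulop /idop (bigD1 y) //= eqxx mul1r big1 ?addr0 // => z /negbTE.
by rewrite eq_sym => ->; rewrite mul0r.
Qed.

Lemma mulopZl c (A B : op) : mulop (scaleop c A) B = scaleop c (mulop A B).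
Proof. by opext; rewrite /mulop /scaleop big_distrr; apply: eq_bigr => z _; rewrite -mulrA. Qed.

Lemma mulopZr c (A B : op) : mulop A (scaleop c B) = scaleop c (mulop A B).
Proof. by opext; rewrite /mulop /scaleop big_distrr; apply: eq_bigr => z _; rewrite mulrCA. Qed.

Lemma scaleopA a b (A : op) : scaleop a (scaleop b A) = scaleop (a * b) A.
Proof. by opext; rewrite /scaleop mulrA. Qed.

Lemma scale1op (A : op) : scaleop 1 A = A.
Proof. by opext; rewrite /scaleop mul1r. Qed.

Lemma adjopK (A : op) : adjop (adjop A) = A.
Proof. by opext; rewrite /adjop conjCK. Qed.

Lemma adjopM (A B : op) : adjop (mulop A B) = mulop (adjop B) (adjop A).
Proof.
opext; rewrite /adjop /mulop rmorph_sum; apply: eq_bigr => z _.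
by rewrite rmorphM mulrC.
Qed.

Lemma adjopZ c (A : op) : adjop (scaleop c A) = scaleop c^* (adjop A).
Proof. by opext; rewrite /adjop /scaleop rmorphM. Qed.

Definition osum (T : finType) (P : pred T) (G : T -> op) : op :=
  fun y x => \sum_(t | P t) G t y x.

Lemma eq_osum (T : finType) (P : pred T) (G1 G2 : T -> op) :
  (forall t, P t -> G1 t = G2 t) -> osum P G1 = osum P G2.
Proof. by move=> eqG; opext; rewrite /osum; apply: eq_bigr => t /eqG ->. Qed.

Lemma exchange_osum (T1 T2 : finType) (P1 : pred T1) (P2 : pred T2) (G : T1 -> T2 -> op) :
  osum P1 (fun s => osum P2 (G s)) = osum P2 (fun t => osum P1 (fun s => G s t)).
Proof. by opext; rewrite /osum exchange_big. Qed.

Lemma mulop_suml (T : finType) (P : pred T) (G : T -> op) B :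
  mulop (osum P G) B = osum P (fun t => mulop (G t) B).
Proof.
opext; rewrite /mulop /osum.
under eq_bigr => z _ do rewrite big_distrl /=.
by rewrite exchange_big.
Qed.

Lemma mulop_sumr (T : finType) (P : pred T) (G : T -> op) A :
  mulop A (osum P G) = osum P (fun t => mulop A (G t)).
Proof.
opext; rewrite /mulop /osum.
under eq_bigr => z _ do rewrite big_distrr /=.
by rewrite exchange_big.
Qed.

Lemma adjop_sum (T : finType) (P : pred T) (G : T -> op) :
  adjop (osum P G) = osum P (fun t => adjop (G t)).
Proof. by opext; rewrite /adjop /osum rmorph_sum. Qed.

Lemma scaleop_sumr c (T : finType) (P : pred T) (G : T -> op) :
  scaleop c (osum P G) = osum P (fun t => scaleop c (G t)).
Proof. by opext; rewrite /scaleop /osum big_distrr. Qed.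

Lemma scaleop_suml (T : finType) (P : pred T) (f : T -> algC) (A : op) :
  osum P (fun t => scaleop (f t) A) = scaleop (\sum_(t | P t) f t) A.
Proof. by opext; rewrite /scaleop /osum big_distrl. Qed.

Lemma applyopM (A B : op) (v : ket) : applyop (mulop A B) v = applyop A (applyop B v).
Proof.
apply: functional_extensionality => u; rewrite /applyop /mulop.
under eq_bigr => z _ do rewrite big_distrl /=.
rewrite exchange_big; apply: eq_bigr => w _.
by rewrite big_distrr /=; apply: eq_bigr => z _; rewrite -mulrA.
Qed.

Lemma applyopZ c (A : op) (v : ket) : applyop (scaleop c A) v = (fun u => c * applyop A v u).
Proof.
apply: functional_extensionality => u; rewrite /applyop /scaleop big_distrr.
by apply: eq_bigr => z _; rewrite -mulrA.
Qed.

Lemma applyopZv (A : op) s (v : ket) :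
  applyop A (fun u => s * v u) = (fun u => s * applyop A v u).
Proof.
apply: functional_extensionality => u; rewrite /applyop big_distrr /=.
by apply: eq_bigr => z _; rewrite mulrCA.
Qed.

Lemma applyop_sum (T : finType) (P : pred T) (G : T -> op) (v : ket) :
  applyop (osum P G) v = (fun u => \sum_(t | P t) applyop (G t) v u).
Proof.
apply: functional_extensionality => u; rewrite /applyop /osum.
under eq_bigr => z _ do rewrite big_distrl /=.
by rewrite exchange_big.
Qed.

Lemma applyop1 (v : ket) : applyop (@idop p n) v = v.
Proof.
apply: functional_extensionality => u; rewrite /applyop /idop (bigD1 u) //= eqxx mul1r.
by rewrite big1 ?addr0 // => z /negbTE; rewrite eq_sym => ->; rewrite mul0r.
Qed.

Lemma applyop0 (A : op) : applyop A (fun _ => 0) = (fun _ => 0).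
Proof. by apply: functional_extensionality => u; rewrite /applyop big1 // => z _; exact: mulr0. Qed.

Lemma conj_outer (A : op) (v : ket) :
  mulop (mulop A (outer v)) (adjop A) = outer (applyop A v).
Proof.
opext; rewrite /mulop /outer /adjop /applyop rmorph_sum big_distrr /=.
apply: eq_bigr => z _; rewrite rmorphM /= !big_distrl /=.
by apply: eq_bigr => w _; ring.
Qed.

Lemma outerZ c (v : ket) : outer (fun u => c * v u) = scaleop (c * c^*) (outer v).
Proof. by opext; rewrite /outer /scaleop rmorphM /=; ring. Qed.

Lemma trace_sum (T : finType) (P : pred T) (G : T -> op) :
  trace (osum P G) = \sum_(t | P t) trace (G t).
Proof. by rewrite /trace /osum exchange_big. Qed.

Lemma traceC (A B : op) : trace (mulop A B) = trace (mulop B A).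
Proof.
rewrite /trace /mulop exchange_big; apply: eq_bigr => u _.
by apply: eq_bigr => z _; rewrite mulrC.
Qed.

Lemma trace_outer_eq0 (v : ket) : trace (outer v) = 0 -> v = (fun _ => 0).
Proof.
move=> tr0; apply: functional_extensionality => u.
have outer_ge0 (x : cfg p n) : true -> 0 <= outer v x x by rewrite /outer -normCK exprn_ge0.
have /eqP := psumr_eq0P outer_ge0 tr0 (i := u) isT.
by rewrite /outer -normCK sqrf_eq0 normr_eq0 => /eqP.
Qed.

End OperatorAlgebra.

Section WeylOperators.
Variables p n : nat.
Hypothesis Hp : prime p.
Local Notation F := 'F_p.
Local Notation vec := (vec p n).
Local Notation cfg := (cfg p n).
Local Notation op := (op p n).
Local Notation ket := (ket p n).

Definition cfg_of_row (a : 'rV[F]_n) : cfg := [ffun j => a 0 j].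
Definition rdot (r : 'rV[F]_n) (x : cfg) : F := \sum_j r 0 j * x j.
Definition dot (a b : 'rV[F]_n) : F := \sum_j a 0 j * b 0 j.

Lemma cfg_of_rowD a b : cfg_of_row (a + b) = cfg_of_row a + cfg_of_row b.
Proof. by apply/ffunP => j; rewrite !ffunE mxE. Qed.
Lemma cfg_of_rowN a : cfg_of_row (- a) = - cfg_of_row a.
Proof. by apply/ffunP => j; rewrite !ffunE mxE. Qed.
Lemma cfg_of_row0 : cfg_of_row 0 = 0.
Proof. by apply/ffunP => j; rewrite !ffunE mxE. Qed.

Lemma rdotDr r x y : rdot r (x + y) = rdot r x + rdot r y.
Proof. by rewrite /rdot -big_split; apply: eq_bigr => j _; rewrite ffunE mulrDr. Qed.
Lemma rdotNr r x : rdot r (- x) = - rdot r x.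
Proof. by rewrite /rdot -sumrN; apply: eq_bigr => j _; rewrite ffunE mulrN. Qed.
Lemma rdotDl r s x : rdot (r + s) x = rdot r x + rdot s x.
Proof. by rewrite /rdot -big_split; apply: eq_bigr => j _; rewrite mxE mulrDl. Qed.
Lemma rdotNl r x : rdot (- r) x = - rdot r x.
Proof. by rewrite /rdot -sumrN; apply: eq_bigr => j _; rewrite mxE mulNr. Qed.
Lemma rdot0l x : rdot 0 x = 0.
Proof. by rewrite /rdot big1 // => j _; rewrite mxE mul0r. Qed.
Lemma rdot_row r a : rdot r (cfg_of_row a) = dot r a.
Proof. by apply: eq_bigr => j _; rewrite ffunE. Qed.

Lemma dotDl a b c : dot (a + b) c = dot a c + dot b c.
Proof. by rewrite /dot -big_split; apply: eq_bigr => j _; rewrite mxE mulrDl. Qed.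
Lemma dotDr a b c : dot c (a + b) = dot c a + dot c b.
Proof. by rewrite /dot -big_split; apply: eq_bigr => j _; rewrite mxE mulrDr. Qed.
Lemma dotNl a c : dot (- a) c = - dot a c.
Proof. by rewrite /dot -sumrN; apply: eq_bigr => j _; rewrite mxE mulNr. Qed.
Lemma dotNr a c : dot c (- a) = - dot c a.
Proof. by rewrite /dot -sumrN; apply: eq_bigr => j _; rewrite mxE mulrN. Qed.
Lemma dotC a b : dot a b = dot b a.
Proof. by apply: eq_bigr => j _; rewrite mulrC. Qed.
Lemma dot0l a : dot 0 a = 0.
Proof. by rewrite /dot big1 // => j _; rewrite mxE mul0r. Qed.
Lemma dot0r a : dot a 0 = 0.
Proof. by rewrite dotC dot0l. Qed.

Lemma dot_unitvec a j c : dot a (unitvec j c) = a 0 j * c.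
Proof.
rewrite /dot (bigD1 j) //= big1 ?addr0 => [|k /negbTE k_j]; rewrite mxE ?eqxx //.
by rewrite k_j mulr0.
Qed.

Lemma EopE y u x :
  Eop y u x = (u == x + cfg_of_row y.1)%:R * chi (rdot y.2 x).
Proof.
rewrite /Eop; congr (_ * _); last by rewrite /rdot (chi_sum Hp).
by congr (_%:R); congr (_ == _); apply/ffunP => j; rewrite !ffunE.
Qed.

Lemma Eop0 : Eop 0 = @idop p n.
Proof. by opext; rewrite EopE /= cfg_of_row0 addr0 rdot0l chi0 mulr1. Qed.

Lemma mulop_Eop a b :
  mulop (Eop a) (Eop b) = scaleop (chi (dot a.2 b.1)) (Eop (a + b)).
Proof.
opext; rewrite /mulop /scaleop.
rewrite (bigD1 (x + cfg_of_row b.1)) //= big1 => [|z z_neq]; last first.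
  by rewrite [Eop b z x]EopE (negbTE z_neq) mul0r mulr0.
rewrite addr0 !EopE eqxx mul1r /= cfg_of_rowD rdotDl rdotDr rdot_row.
rewrite (addrC (cfg_of_row a.1)) addrA !(chiD Hp); ring.
Qed.

Lemma adjop_Eop a : adjop (Eop a) = scaleop (chi (dot a.2 a.1)) (Eop (- a)).
Proof.
opext; rewrite /adjop /scaleop !EopE /= rmorphM /= rmorph_nat (conj_chi Hp).
rewrite [_ == x + _]eq_sym -subr_eq cfg_of_rowN.
case: eqP => [<-|_]; last by rewrite !mul0r mulr0.
by rewrite rdotNl rdotDr rdotNr rdot_row !mul1r -(chiD Hp) opprB.
Qed.

Lemma applyop_Eop a (v : ket) u :
  applyop (Eop a) v u =
  chi (rdot a.2 (u - cfg_of_row a.1)) * v (u - cfg_of_row a.1).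
Proof.
rewrite /applyop (bigD1 (u - cfg_of_row a.1)) //= EopE subrK eqxx mul1r big1 ?addr0 //.
by move=> z z_neq; rewrite EopE -subr_eq eq_sym (negbTE z_neq) !mul0r.
Qed.

Lemma trace_outer_Eop (e : vec) (v : ket) :
  trace (outer (applyop (Eop e) v)) = trace (outer v).
Proof.
rewrite /trace /outer.
under eq_bigr => u _ do rewrite applyop_Eop rmorphM /= mulrACA (chi_mulconj Hp) mul1r.
by rewrite (reindex_inj (addIr (cfg_of_row e.1))) /=; apply: eq_bigr => u _; rewrite addrK.
Qed.

Lemma sformE (x y : vec) : sform x y = dot x.1 y.2 - dot x.2 y.1.
Proof. by []. Qed.

Lemma sformDl (x y z : vec) : sform (x + y) z = sform x z + sform y z.
Proof. rewrite !sformE /= !dotDl; ring. Qed.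
Lemma sformDr (x y z : vec) : sform z (x + y) = sform z x + sform z y.
Proof. rewrite !sformE /= !dotDr; ring. Qed.
Lemma sform0l (z : vec) : sform 0 z = 0.
Proof. by rewrite sformE /= !dot0l subrr. Qed.

Lemma Eop_comm (c v : vec) :
  mulop (Eop c) (Eop v) = scaleop (chi (- sform c v)) (mulop (Eop v) (Eop c)).
Proof.
rewrite !mulop_Eop scaleopA -(chiD Hp) addrC sformE; congr (scaleop (chi _) _).
by rewrite (dotC c.1) (dotC c.2); ring.
Qed.

Lemma Eop_conj (t u : vec) :
  mulop (mulop (Eop t) (Eop u)) (adjop (Eop t)) = scaleop (chi (sform u t)) (Eop u).
Proof.
rewrite adjop_Eop mulop_Eop mulopZl mulopZr mulop_Eop !scaleopA -!(chiD Hp).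
rewrite [t + u - t]addrAC subrr add0r sformE; congr (scaleop (chi _) _).
by rewrite /= dotDl !dotNr (dotC u.1); ring.
Qed.

Lemma sum_chi_eq0 (G : {set vec}) (f : vec -> F) (g : vec) :
  (forall u v, u \in G -> v \in G -> u + v \in G) ->
  (forall u v, u \in G -> v \in G -> u - v \in G) ->
  (forall u v, f (u + v) = f u + f v) ->
  g \in G -> f g != 0 -> \sum_(u in G) chi (f u) = 0.
Proof.
move=> GD GB fD Gg fg_neq0; set S := \sum_(u in G) _.
have S_shift : S = chi (f g) * S.
  rewrite /S big_distrr /= (reindex (fun u : vec => u + g)) /=; last first.
    by exists (fun u : vec => u - g) => u _; rewrite ?addrK ?subrK.
  apply: eq_big => [u|u _]; last by rewrite fD (chiD Hp) mulrC.
  by apply/idP/idP => Gu; [rewrite -(addrK g u); exact: GB | exact: GD].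
have /eqP : (1 - chi (f g)) * S = 0 by rewrite mulrBl mul1r -S_shift subrr.
rewrite mulf_eq0 subr_eq0 => /orP[/eqP chi1 | /eqP //].
by move: fg_neq0; rewrite -(chi_eq1 Hp (esym chi1)) eqxx.
Qed.

Lemma sform_nondeg (c : vec) : c != 0 -> exists g, sform c g != 0.
Proof.
have row_neq0 (a : 'rV[F]_n) : a != 0 -> exists j, a 0 j != 0.
  move=> a_neq0; apply/existsP; apply: contraR a_neq0 => /existsPn a0.
  by apply/eqP/rowP => j; rewrite mxE; apply/eqP; move: (a0 j); rewrite negbK.
case: c => c1 c2 c_neq0; have [c1_0|] := eqVneq c1 0.
  have [|j c2j] := row_neq0 c2; first by apply: contraNneq c_neq0 => ->; rewrite c1_0.
  by exists (unitvec j 1, 0); rewrite sformE /= dot_unitvec dot0r sub0r mulr1 oppr_eq0.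
case/row_neq0 => j c1j.
by exists (0, unitvec j 1); rewrite sformE /= dot_unitvec dot0r subr0 mulr1.
Qed.

Lemma sum_chi_sform (c : vec) : c != 0 -> \sum_(x : vec) chi (sform c x) = 0.
Proof.
case/sform_nondeg => g cg_neq0.
rewrite (eq_bigl (fun u => u \in [set: vec])) => [|u]; last by rewrite in_setT.
by apply: (@sum_chi_eq0 _ (sform c) g) => // *; rewrite ?in_setT ?sformDr.
Qed.

End WeylOperators.

Section Supports.
Variables p n : nat.
Local Notation vec := (vec p n).

Definition supported (S : {set 'I_n}) : {set vec} := [set w | supp w \subset S].

Lemma suppP (S : {set 'I_n}) (y : vec) :
  reflect (forall j, j \notin S -> y.1 0 j = 0 /\ y.2 0 j = 0) (supp y \subset S).
Proof.
apply: (iffP subsetP) => [yS j jS | y0 j].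
  have : j \notin supp y by apply: contra jS; apply: yS.
  by rewrite inE negb_or !negbK => /andP[/eqP -> /eqP ->].
rewrite inE => yj; apply/negPn/negP => /y0[y1j y2j].
by move: yj; rewrite y1j y2j eqxx.
Qed.

Lemma proj_supported (S : {set 'I_n}) (y : vec) : supp y \subset S -> proj S y = y.
Proof.
case: y => y1 y2 /suppP yS; congr pair; apply/rowP => j; rewrite mxE;
  by case: ifP => // /negbT /yS[].
Qed.

Lemma supp_proj (S : {set 'I_n}) (y : vec) : supp (proj S y) \subset S.
Proof. by apply/suppP => j jS; rewrite !mxE (negbTE jS). Qed.

Lemma projC_eq0 (S : {set 'I_n}) (y : vec) : (proj (~: S) y == 0) = (supp y \subset S).
Proof.
apply/eqP/suppP => [[/rowP y1 /rowP y2] j jS | yS].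
  by move: (y1 j) (y2 j); rewrite !mxE inE jS.
congr pair; apply/rowP => j; rewrite !mxE inE;
  by case: ifP => // /yS[y1j y2j]; rewrite ?y1j ?y2j.
Qed.

Lemma projD (S : {set 'I_n}) (u v : vec) : proj S (u + v) = proj S u + proj S v.
Proof. by congr pair; apply/rowP => j; rewrite !mxE; case: ifP; rewrite ?addr0. Qed.

Lemma proj_projC (S : {set 'I_n}) (y : vec) : proj S (proj (~: S) y) = 0.
Proof. by congr pair; apply/rowP => j; rewrite !mxE inE; case: (j \in S); rewrite /= ?mxE. Qed.

Lemma sform_proj (S : {set 'I_n}) (c y : vec) : sform c (proj S y) = sform (proj S c) y.
Proof.
rewrite !sformE /dot /=; congr (_ - _); apply: eq_bigr => j _; rewrite !mxE;
  by case: ifP; rewrite ?mulr0 ?mul0r.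
Qed.

Lemma supportedD (S : {set 'I_n}) u v :
  u \in supported S -> v \in supported S -> u + v \in supported S.
Proof.
rewrite !inE => /suppP uS /suppP vS; apply/suppP => j jS.
by have [u1 u2] := uS j jS; have [v1 v2] := vS j jS; rewrite /= !mxE u1 u2 v1 v2 !addr0.
Qed.

Lemma supportedN (S : {set 'I_n}) u : u \in supported S -> - u \in supported S.
Proof.
rewrite !inE => /suppP uS; apply/suppP => j jS.
by have [u1 u2] := uS j jS; rewrite /= !mxE u1 u2 !oppr0.
Qed.

Lemma supportedS (S1 S2 : {set 'I_n}) u :
  S1 \subset S2 -> u \in supported S1 -> u \in supported S2.
Proof. by rewrite !inE => S12 /subset_trans; apply. Qed.

Lemma unitvec_supported (S : {set 'I_n}) i a b :
  i \in S -> (unitvec i a, unitvec i b) \in supported S.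
Proof.
move=> iS; rewrite inE; apply/suppP => j jS; rewrite !mxE.
by have -> : (j == i) = false by apply: contraNF jS => /eqP ->.
Qed.

End Supports.

Section ErrorMixture.
Variables p n : nat.
Hypothesis Hp : prime p.
Local Notation vec := (vec p n).
Local Notation op := (op p n).
Variable I : {set 'I_n}.
Variable phi : ket p n.

Definition error_mixture (rho : op) : Prop :=
  exists (T : finType) (w : T -> algC) (e : T -> vec),
  [/\ forall t, e t \in supported p I, \sum_t w t = 1 &
      rho = osum predT (fun t => scaleop (w t) (outer (applyop (Eop (e t)) phi)))].

Lemma error_mixture_outer : error_mixture (outer phi).
Proof.
exists 'I_1, (fun _ => 1), (fun _ => 0); split=> [_||]; last 1 first.
- by opext; rewrite /osum big_ord1 (Eop0 _ Hp) applyop1 /scaleop mul1r.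
- by rewrite inE; apply/suppP => j _; rewrite !mxE.
- by rewrite big_ord1.
Qed.

Lemma conj_Eop_mixture (x : vec) (T : finType) (w : T -> algC) (e : T -> vec) :
  mulop (mulop (Eop x) (osum predT (fun t => scaleop (w t) (outer (applyop (Eop (e t)) phi)))))
        (adjop (Eop x)) =
  osum predT (fun t => scaleop (w t) (outer (applyop (Eop (x + e t)) phi))).
Proof.
rewrite mulop_sumr mulop_suml; apply: eq_osum => t _.
rewrite mulopZr mulopZl conj_outer -applyopM (mulop_Eop Hp) applyopZ outerZ.
by rewrite (chi_mulconj Hp) scale1op.
Qed.

Lemma gamma_at_mixture i (T : finType) (w : T -> algC) (e : T -> vec) :
  gamma_at i (osum predT (fun t => scaleop (w t) (outer (applyop (Eop (e t)) phi)))) =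
  osum predT (fun abt : 'F_p * 'F_p * T => scaleop ((p ^ 2)%:R^-1 * w abt.2)
    (outer (applyop (Eop ((unitvec i abt.1.1, unitvec i abt.1.2) + e abt.2)) phi))).
Proof.
pose F a b t := outer (applyop (Eop ((unitvec i a, unitvec i b) + e t)) phi).
opext; rewrite /gamma_at /scaleop.
under eq_bigr => a _ do under eq_bigr => b _ do rewrite conj_Eop_mixture.
rewrite /osum -(pair_bigA _ (fun ab t => (p ^ 2)%:R^-1 * w t * F ab.1 ab.2 t y x)) /=.
rewrite -(pair_bigA _ (fun a b => \sum_t (p ^ 2)%:R^-1 * w t * F a b t y x)) /=.
rewrite big_distrr; apply: eq_bigr => a _; rewrite big_distrr; apply: eq_bigr => b _.
by rewrite big_distrr; apply: eq_bigr => t _; rewrite /scaleop -mulrA.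
Qed.

Lemma error_mixture_gamma i rho : i \in I -> error_mixture rho -> error_mixture (gamma_at i rho).
Proof.
move=> iI [T [w [e [eI w1 ->]]]].
exists ('F_p * 'F_p * T)%type, (fun abt => (p ^ 2)%:R^-1 * w abt.2).
exists (fun abt => (unitvec i abt.1.1, unitvec i abt.1.2) + e abt.2); split.
- by move=> abt; apply: supportedD; [exact: unitvec_supported | exact: eI].
- rewrite -(pair_bigA _ (fun ab t => (p ^ 2)%:R^-1 * w t)) /=.
  rewrite -(pair_bigA _ (fun a b => \sum_t (p ^ 2)%:R^-1 * w t)) /=.
  under eq_bigr => a _ do under eq_bigr => b _ do rewrite -big_distrr /= w1 mulr1.
  rewrite !sumr_const card_Fp // -mulrnA mulnn -[X in X = 1]mulr_natr mulVf //.
  by rewrite pnatr_eq0 expn_eq0 negb_and -lt0n prime_gt0.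
- exact: gamma_at_mixture.
Qed.

Lemma error_mixture_GammaI : error_mixture (GammaI I (outer phi)).
Proof.
have : {subset enum I <= I} by move=> i; rewrite mem_enum.
rewrite /GammaI; elim: (enum I) => [_|i s IHs sI] /=; first exact: error_mixture_outer.
apply: error_mixture_gamma; first by apply: sI; rewrite inE eqxx.
by apply: IHs => j js; apply: sI; rewrite inE js orbT.
Qed.

End ErrorMixture.

Section Code.
Variables p n : nat.
Hypothesis Hp : prime p.
Local Notation vec := (vec p n).
Local Notation supported := (@supported p n).

Variable C : {set vec}.
Hypothesis HC : code_subspace C.

Lemma code0 : 0 \in C.
Proof. by case: HC. Qed.

Lemma codeD u v : u \in C -> v \in C -> u + v \in C.
Proof.
by case: HC => _ C_lin Cu Cv; have := C_lin 1 u v Cu Cv; rewrite !scale1r; case: u {Cu}.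
Qed.

Lemma codeB u v : u \in C -> v \in C -> u - v \in C.
Proof.
case: HC => _ C_lin Cu Cv; have := C_lin (-1) v u Cv Cu.
by rewrite !scaleN1r; case: u {Cu} => u1 u2; case: v {Cv} => v1 v2 /=; rewrite !(addrC (- _)).
Qed.

Lemma sum_chi_code_eq0 y : y \notin sdual C -> \sum_(c in C) chi (sform c y) = 0.
Proof.
rewrite inE => /forall_inPn[c Cc cy_neq0].
apply: (sum_chi_eq0 Hp _ _ _ Cc cy_neq0) => [u v|u v|u v]; [exact: codeD | exact: codeB | exact: sformDl].
Qed.

Variable J : {set 'I_n}.

Definition CJ : {set vec} := [set c in C | supp c \subset J].

Lemma CJ_code c : c \in CJ -> c \in C.
Proof. by rewrite inE => /andP[]. Qed.

Lemma CJ_supported c : c \in CJ -> c \in supported J.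
Proof. by rewrite !inE => /andP[]. Qed.

Lemma CJ0 : 0 \in CJ.
Proof. by rewrite !inE code0; apply/suppP => j _; rewrite !mxE. Qed.

Lemma CJ_gt0 : (0 < #|CJ|)%N.
Proof. by apply/card_gt0P; exists 0; exact: CJ0. Qed.

Lemma CJD u v : u \in CJ -> v \in CJ -> u + v \in CJ.
Proof.
move=> CJu CJv; have := supportedD (CJ_supported CJu) (CJ_supported CJv).
by rewrite !inE codeD ?CJ_code.
Qed.

Lemma CJB u v : u \in CJ -> v \in CJ -> u - v \in CJ.
Proof.
move=> CJu CJv; have := supportedD (CJ_supported CJu) (supportedN (CJ_supported CJv)).
by rewrite !inE codeB ?CJ_code.
Qed.

Lemma sum_chi_code_coset v : {in CJ, forall c, sform c v = 0} ->
  \sum_(x : vec) \sum_(c in C) chi (sform c (v + proj (~: J) x)) =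
  (#|CJ| * #|{: vec}|)%:R.
Proof.
move=> v_orth; rewrite exchange_big /=.
rewrite (eq_bigr (fun c => if supp c \subset J then #|{: vec}|%:R else 0)) => [|c Cc].
  rewrite -big_mkcondr /= sumr_const mulnC mulrnA; congr (_ *+ _).
  by apply: eq_card => c; rewrite inE.
under eq_bigr => x _ do rewrite sformDr (chiD Hp) sform_proj.
rewrite -big_distrr /=; case: ifP => cJ.
  rewrite v_orth ?inE ?Cc ?cJ // chi0 mul1r.
  move: cJ; rewrite -projC_eq0 => /eqP ->.
  by under eq_bigr => x _ do rewrite sform0l chi0; rewrite sumr_const.
by rewrite (sum_chi_sform Hp) ?mulr0 // projC_eq0 cJ.
Qed.

(* If no such y existed, every v + proj (~: J) x would lie outside sdual C, and
   the double sum of [sum_chi_code_coset] would vanish. *)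
Lemma orth_CJ_proj_sdual v : v \in supported J -> {in CJ, forall c, sform c v = 0} ->
  exists2 y, y \in sdual C & proj J y = v.
Proof.
move=> vJ v_orth.
have [/exists_inP[y Cy /eqP <-]|/exists_inPn no_y] :=
  boolP [exists y in sdual C, proj J y == v]; first by exists y.
have vec_gt0 : (0 < #|{: vec}|)%N by apply/card_gt0P; exists 0.
have /eqP := sum_chi_code_coset v_orth.
rewrite big1 => [|x _]; last first.
  apply: sum_chi_code_eq0; apply: contraTN isT => /no_y.
  by rewrite projD proj_projC addr0 proj_supported ?eqxx //; move: vJ; rewrite inE.
by rewrite eq_sym pnatr_eq0 muln_eq0 -!leqn0 leqNgt CJ_gt0 leqNgt vec_gt0.
Qed.

Lemma sum_chi_CJ_eq0 v c : c \in CJ -> sform c v != 0 -> \sum_(d in CJ) chi (- sform d v) = 0.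
Proof.
move=> CJc cv; apply: (sum_chi_eq0 Hp _ _ _ CJc); rewrite ?oppr_eq0 //.
- exact: CJD.
- exact: CJB.
- by move=> u w; rewrite sformDl opprD.
Qed.

Variable I : {set 'I_n}.
Hypothesis HIJ : I \subset J.
Hypothesis Hsh : shortening I (puncturing J (sdual C)) = shortening I C.

Lemma orth_CJ_code v : v \in supported I -> {in CJ, forall c, sform c v = 0} -> v \in C.
Proof.
move=> vI v_orth.
have [y Cy yv] := orth_CJ_proj_sdual (supportedS HIJ vI) v_orth.
have vI' : supp v \subset I by move: vI; rewrite inE.
have : v \in shortening I (puncturing J (sdual C)).
  apply/imsetP; exists v; last by rewrite proj_supported.
  by rewrite inE vI' andbT; apply/imsetP; exists y.
by rewrite Hsh => /imsetP[c]; rewrite inE => /andP[Cc cI] ->; rewrite proj_supported.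
Qed.

End Code.

Section Locality.
Variables p n : nat.
Local Notation op := (op p n).
Local Notation cfg := (cfg p n).
Variable J : {set 'I_n}.

Definition local_to (A : op) : Prop :=
  forall u x, A u x = (agree_off J u x)%:R * A (restr J u) (restr J x).

Lemma liftJ_local A : local_to A -> liftJ J A = A.
Proof. by move=> A_J; opext; rewrite /liftJ -A_J. Qed.

Lemma local_scale c A : local_to A -> local_to (scaleop c A).
Proof. by move=> A_J u x; rewrite /scaleop A_J; ring. Qed.

Lemma local_osum (T : finType) (P : pred T) (G : T -> op) :
  (forall t, P t -> local_to (G t)) -> local_to (osum P G).
Proof. by move=> G_J u x; rewrite /osum big_distrr /=; apply: eq_bigr => t /G_J. Qed.

Variable a : 'rV['F_p]_n.
Hypothesis a_J : forall j, j \notin J -> a 0 j = 0.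

Lemma rdot_restr x : rdot a (restr J x) = rdot a x.
Proof.
apply: eq_bigr => j _; rewrite ffunE; case: ifP => // /negbT /a_J ->.
by rewrite !mul0r.
Qed.

Lemma eq_add_restr (u x : cfg) :
  (u == x + cfg_of_row a) = agree_off J u x && (restr J u == restr J x + cfg_of_row a).
Proof.
apply/eqP/andP => [-> | [/forallP u_x /eqP u_xJ]].
  split; first by apply/forallP => j; apply/implyP => /a_J; rewrite !ffunE => ->; rewrite addr0.
  by apply/eqP/ffunP => j; rewrite !ffunE; case: ifP => // /negbT /a_J ->; rewrite addr0.
apply/ffunP => j; have := congr1 (fun f : cfg => f j) u_xJ; rewrite /= !ffunE.
case: ifP => // /negbT jJ _; move/implyP: (u_x j) => /(_ jJ) /eqP ->.
by rewrite a_J ?addr0.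
Qed.

End Locality.

Lemma local_Eop p n (Hp : prime p) (J : {set 'I_n}) (v : vec p n) :
  v \in supported p J -> local_to J (Eop v).
Proof.
rewrite inE => /suppP v_J u x.
have [v1_J v2_J] : (forall j, j \notin J -> v.1 0 j = 0) /\ (forall j, j \notin J -> v.2 0 j = 0).
  by split=> j /v_J[].
by rewrite !(EopE Hp) (rdot_restr v2_J) mulrA -natrM mulnb (eq_add_restr v1_J).
Qed.

Section RecoveryOperators.
Variables p n : nat.
Hypothesis Hp : prime p.
Local Notation vec := (vec p n).
Local Notation op := (op p n).
Local Notation supported := (@supported p n).

Variable C : {set vec}.
Hypothesis HC : code_subspace C.
Variables I J : {set 'I_n}.
Hypothesis HIJ : I \subset J.
Variable lam : op -> algC.
Local Notation CJ := (CJ C J).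

Definition lamE (c : vec) : algC := lam (Eop c).

(* The junk value 1 for lamE c = 0 is harmless: then Q(C) = 0 (see [Qcode_eq0]). *)
Definition mu (c : vec) : algC := if lamE c == 0 then 1 else (lamE c)^-1.

Definition nCJ : algC := #|CJ|%:R.

Definition PJ : op := scaleop nCJ^-1 (osum (mem CJ) (fun c => scaleop (mu c) (Eop c))).

Definition same_syndrome (t w : vec) : bool := [forall c in CJ, sform c t == sform c w].

Definition correction (w : vec) : vec :=
  if [pick t in supported I | same_syndrome t w] is Some t then t else proj J w.

Lemma mu_neq0 c : mu c != 0.
Proof. by rewrite /mu; case: (lamE c =P 0) => [_|/eqP]; rewrite ?oner_neq0 ?invr_eq0. Qed.

Lemma nCJ_neq0 : nCJ != 0.
Proof. by rewrite pnatr_eq0 -lt0n CJ_gt0. Qed.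

Lemma correction_supported w : correction w \in supported J.
Proof.
rewrite /correction; case: pickP => [t /andP[tI _]|_]; first exact: supportedS tI.
by rewrite inE supp_proj.
Qed.

Lemma sform_correction w c : c \in CJ -> sform c (correction w) = sform c w.
Proof.
move=> CJc; rewrite /correction; case: pickP => [t /andP[_ /forall_inP /(_ c CJc) /eqP //]|_].
by rewrite sform_proj proj_supported //; move: CJc; rewrite inE => /andP[].
Qed.

Lemma correction_supported_I w e :
  e \in supported I -> same_syndrome e w -> correction w \in supported I.
Proof.
move=> eI e_w; rewrite /correction; case: pickP => [t /andP[tI _] // | /(_ e)].
by rewrite eI e_w.
Qed.

Definition gram (c d : vec) : algC :=
  (nCJ^-1)^* * nCJ^-1 * ((mu c)^* * mu d) * (chi (dot c.2 c.1) * chi (dot (- c).2 d.1)).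

Lemma adjPJ_PJ : mulop (adjop PJ) PJ =
  osum (mem CJ) (fun c => osum (mem CJ) (fun d => scaleop (gram c d) (Eop (- c + d)))).
Proof.
rewrite /PJ adjopZ adjop_sum mulopZl mulopZr scaleopA mulop_suml scaleop_sumr.
apply: eq_osum => c _; rewrite mulop_sumr scaleop_sumr; apply: eq_osum => d _.
rewrite adjopZ mulopZl mulopZr (adjop_Eop Hp) mulopZl (mulop_Eop Hp) !scaleopA /gram.
by congr scaleop; ring.
Qed.

Definition kappa : algC :=
  (nCJ^-1)^* * nCJ^-1 * #|{: vec}|%:R * \sum_(c in CJ) (mu c)^* * mu c.

Lemma kappa_gt0 : 0 < kappa.
Proof.
have mu_ge0 c : c \in CJ -> 0 <= (mu c)^* * mu c by rewrite -normCKC exprn_ge0.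
rewrite /kappa -normCKC; apply: mulr_gt0; first apply: mulr_gt0.
- by rewrite exprn_gt0 // normr_gt0 invr_eq0 nCJ_neq0.
- by rewrite ltr0n; apply/card_gt0P; exists 0.
rewrite lt_def sumr_ge0 // andbT; apply/eqP => /(psumr_eq0P mu_ge0)/(_ _ (CJ0 HC J)) /eqP.
by rewrite -normCKC sqrf_eq0 normr_eq0 (negbTE (mu_neq0 0)).
Qed.

Definition alpha : algC := sqrtC kappa^-1.

Lemma alpha_normalizes : alpha^* * alpha * kappa = 1.
Proof.
have alpha_real : alpha^* = alpha.
  by apply/conj_Creal/ger0_real; rewrite sqrtC_ge0 invr_ge0 ltW ?kappa_gt0.
by rewrite alpha_real -expr2 sqrtCK mulVf // lt0r_neq0 // kappa_gt0.
Qed.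

Definition kraus (w : vec) : op := scaleop alpha (mulop PJ (adjop (Eop (correction w)))).

Lemma adjkraus_kraus w : mulop (adjop (kraus w)) (kraus w) =
  scaleop (alpha^* * alpha) (osum (mem CJ) (fun c => osum (mem CJ) (fun d =>
    scaleop (gram c d * chi (sform (- c + d) (correction w))) (Eop (- c + d))))).
Proof.
rewrite /kraus adjopZ adjopM adjopK mulopZl mulopZr scaleopA; congr scaleop.
rewrite mulopA -(mulopA (adjop PJ)) -mulopA adjPJ_PJ mulop_sumr mulop_suml.
apply: eq_osum => c _; rewrite mulop_sumr mulop_suml; apply: eq_osum => d _.
by rewrite mulopZr mulopZl (Eop_conj Hp) scaleopA.
Qed.

(* Since [- c + d] lies in C_J, the phase only depends on the syndrome of w, and
   summing it over all w leaves the diagonal terms [c = d] only. *)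
Lemma kraus_complete : osum predT (fun w => mulop (adjop (kraus w)) (kraus w)) = @idop p n.
Proof.
opext; rewrite /osum.
under eq_bigr => w _ do rewrite adjkraus_kraus /scaleop /osum.
transitivity (\sum_(c in CJ) \sum_(d in CJ) alpha^* * alpha * gram c d * Eop (- c + d) y x *
   \sum_(w : vec) chi (sform (- c + d) w)).
  under eq_bigr => w _ do rewrite big_distrr /=.
  rewrite exchange_big /=; apply: eq_bigr => c CJc.
  under eq_bigr => w _ do rewrite big_distrr /=.
  rewrite exchange_big /=; apply: eq_bigr => d CJd.
  have CJdc : - c + d \in CJ by rewrite addrC CJB.
  by rewrite big_distrr /=; apply: eq_bigr => w _; rewrite sform_correction //; ring.
have diag_sum : \sum_(c in CJ) alpha^* * alpha *
    ((nCJ^-1)^* * nCJ^-1 * #|{: vec}|%:R * ((mu c)^* * mu c)) * idop y x = idop y x.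
  by rewrite -big_distrl -big_distrr -big_distrr /= -/kappa alpha_normalizes mul1r.
rewrite -diag_sum; apply: eq_bigr => c CJc.
rewrite (bigD1 c) //= [X in _ + X]big1 ?addr0 => [|d /andP[_ d_c]]; last first.
  by rewrite (sum_chi_sform Hp) ?mulr0 // addrC subr_eq0.
rewrite addNr (Eop0 _ Hp).
under eq_bigr => w _ do rewrite sform0l chi0.
rewrite sumr_const /gram dotNl -(chiD Hp) addrN chi0; ring.
Qed.

Lemma local_kraus w : local_to J (kraus w).
Proof.
rewrite /kraus /PJ mulopZl mulop_suml; do 2 apply: local_scale; apply: local_osum => c CJc.
rewrite mulopZl (adjop_Eop Hp) mulopZr (mulop_Eop Hp); do 3 apply: local_scale.
apply: (local_Eop Hp); apply: supportedD; first exact: CJ_supported CJc.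
exact/supportedN/correction_supported.
Qed.

Definition kraus_family (k : 'I_#|{: vec}|) : op := kraus (enum_val k).

Lemma kraus_mapE rho :
  kraus_map kraus_family rho = osum predT (fun w => mulop (mulop (kraus w) rho) (adjop (kraus w))).
Proof.
opext; rewrite /kraus_map /osum /kraus_family.
by rewrite -(big_enum_val (fun w => mulop (mulop (kraus w) rho) (adjop (kraus w)) y x)).
Qed.

Lemma trace_kraus_map rho : trace (kraus_map kraus_family rho) = trace rho.
Proof.
rewrite kraus_mapE trace_sum.
under eq_bigr => w _ do rewrite traceC -mulopA.
by rewrite -trace_sum -mulop_suml kraus_complete mul1op.
Qed.

Lemma kraus_map_osum (T : finType) (P : pred T) (f : T -> algC) (G : T -> op) :
  kraus_map kraus_family (osum P (fun t => scaleop (f t) (G t))) =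
  osum P (fun t => scaleop (f t) (kraus_map kraus_family (G t))).
Proof.
rewrite kraus_mapE.
under eq_osum => w _ do rewrite mulop_sumr mulop_suml.
rewrite exchange_osum; apply: eq_osum => t _.
rewrite kraus_mapE scaleop_sumr; apply: eq_osum => w _.
by rewrite mulopZr mulopZl.
Qed.

Lemma kraus_Eop w e (v : ket p n) :
  let t := correction w in
  applyop (kraus w) (applyop (Eop e) v) =
  (fun u => alpha * (chi (dot t.2 t.1) * chi (dot (- t).2 e.1)) *
            applyop PJ (applyop (Eop (- t + e)) v) u).
Proof.
rewrite /kraus applyopZ !applyopM -(applyopM (adjop _)) (adjop_Eop Hp) mulopZl (mulop_Eop Hp).
by rewrite scaleopA applyopZ applyopZv; apply: functional_extensionality => u; rewrite mulrA.
Qed.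

Section CodeState.
Hypothesis Hsh : shortening I (puncturing J (sdual C)) = shortening I C.
Variable phi : ket p n.
Hypothesis Qphi : Qcode C lam phi.

Lemma Qcode_Eop c : c \in C -> applyop (Eop c) phi = (fun u => lamE c * phi u).
Proof. by move=> Cc; apply: functional_extensionality => u; apply: Qphi; constructor. Qed.

Lemma Qcode_eq0 c : c \in C -> lamE c = 0 -> phi = (fun _ => 0).
Proof.
move=> Cc lam0; apply: functional_extensionality => u.
have := congr1 (fun f => f (u + cfg_of_row c.1)) (Qcode_Eop Cc).
rewrite (applyop_Eop Hp) lam0 mul0r addrK => /eqP.
by rewrite mulf_eq0 (negbTE (chi_neq0 Hp _)) => /eqP.
Qed.

Lemma PJ_Eop v : {in CJ, forall c, lamE c != 0} ->
  applyop PJ (applyop (Eop v) phi) =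
  (fun u => (nCJ^-1 * \sum_(c in CJ) chi (- sform c v)) * applyop (Eop v) phi u).
Proof.
move=> lam_neq0; rewrite /PJ applyopZ applyop_sum; apply: functional_extensionality => u.
rewrite -mulrA; congr (_ * _); rewrite big_distrl /=; apply: eq_bigr => c CJc.
rewrite applyopZ -applyopM (Eop_comm Hp) applyopZ applyopM Qcode_Eop; last exact: CJ_code CJc.
by rewrite applyopZv /mu (negbTE (lam_neq0 c CJc)); field; exact: lam_neq0.
Qed.

(* [PJ] annihilates [E_(e - t) phi] unless [e - t] has zero C_J-syndrome; then [e - t]
   is supported in I, so it lies in C by [orth_CJ_code] and acts on phi as a scalar. *)
Lemma kraus_Eop_Qcode w e : e \in supported I ->
  exists s, applyop (kraus w) (applyop (Eop e) phi) = (fun u => s * phi u).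
Proof.
move=> eI.
have [/exists_inP[c CJc /eqP lam0]|lam_neq0] := boolP [exists c in CJ, lamE c == 0].
  exists 0; rewrite (Qcode_eq0 (CJ_code CJc) lam0) !applyop0.
  by apply: functional_extensionality => u; rewrite mul0r.
have {}lam_neq0 : {in CJ, forall c, lamE c != 0}.
  by move=> c CJc; apply: contra lam_neq0 => lam0; apply/exists_inP; exists c.
rewrite kraus_Eop PJ_Eop //; set t := correction w; set v := - t + e.
have [/exists_inP[c CJc cv]|v_orth] := boolP [exists c in CJ, sform c v != 0].
  exists 0; apply: functional_extensionality => u.
  by rewrite (sum_chi_CJ_eq0 Hp HC CJc cv) !(mulr0, mul0r).
have {}v_orth : {in CJ, forall c, sform c v = 0}.
  by move=> c CJc; apply/eqP; apply: contraNT v_orth => cv; apply/exists_inP; exists c.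
have e_w : same_syndrome e w.
  apply/forall_inP => c CJc; rewrite -(sform_correction w CJc) -/t.
  by rewrite -[e](addNKr t) -/v sformDr v_orth ?addr0.
have vI : v \in supported I.
  exact: supportedD (supportedN (correction_supported_I eI e_w)) eI.
rewrite Qcode_Eop; last exact: (orth_CJ_code Hp HC HIJ Hsh).
by eexists; apply: functional_extensionality => u; rewrite !mulrA.
Qed.

Lemma kraus_map_outer_Eop e : e \in supported I ->
  kraus_map kraus_family (outer (applyop (Eop e) phi)) = outer phi.
Proof.
move=> eI; have [s s_phi] := fin_all_exists (fun w => kraus_Eop_Qcode w eI).
have kraus_phi : kraus_map kraus_family (outer (applyop (Eop e) phi)) =
    scaleop (\sum_(w | predT w) s w * (s w)^*) (outer phi).
  rewrite kraus_mapE -scaleop_suml; apply: eq_osum => w _.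
  by rewrite conj_outer s_phi outerZ.
rewrite kraus_phi; have [/trace_outer_eq0 phi0|tr_neq0] := eqVneq (trace (outer phi)) 0.
  by rewrite phi0; opext; rewrite /scaleop /outer !mul0r mulr0.
have := trace_kraus_map (outer (applyop (Eop e) phi)).
rewrite (trace_outer_Eop Hp) kraus_phi /trace /scaleop -big_distrr /= -/(trace (outer phi)).
by rewrite -[RHS]mul1r => /(mulIf tr_neq0) ->; exact: scale1op.
Qed.

Lemma kraus_map_error_mixture rho :
  error_mixture I phi rho -> kraus_map kraus_family rho = outer phi.
Proof.
case=> T [w [e [eI w1 ->]]]; rewrite kraus_map_osum.
under eq_osum => t _ do rewrite kraus_map_outer_Eop //.
by rewrite scaleop_suml w1 scale1op.
Qed.

End CodeState.

End RecoveryOperators.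

Unset Implicit Arguments.

Theorem proposition13 (p n : nat) (Hp : prime p)
    (C : {set vec p n}) (HC : code_subspace C) (Hso : C \subset sdual C)
    (I J : {set 'I_n}) (HI : I != set0) (HIJ : I \proper J) (HJ : J \proper [set: 'I_n])
    (lam : op p n -> algC) (Hlam : is_character C lam) :
  shortening I (puncturing J (sdual C)) = shortening I C ->
  locally_recoverable I J (Qcode C lam).
Proof.
move=> Hsh; have subIJ : I \subset J := proper_sub HIJ.
exists #|{: vec p n}|, (kraus_family C I J lam) => /=.
have -> : (fun k => liftJ J (kraus_family C I J lam k)) = kraus_family C I J lam.
  by apply: functional_extensionality => k; apply/liftJ_local/(local_kraus Hp).
split=> [rho|phi Qphi]; first exact: (trace_kraus_map Hp HC).
move=> y x; by rewrite (kraus_map_error_mixture Hp HC subIJ Hsh Qphi (error_mixture_GammaI Hp I phi)).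
Qed.
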